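(* Let $N\to\infty$ and let $h=h(N)$ satisfy $h\to\infty$ and $h=o(N)$ as $N\to\infty$. Let $f_1,f_2:\mathbb{N}\to\mathbb{R}$ satisfy, for every $\varepsilon>0$, $f_1(n),f_2(n)\ll_{\varepsilon}N^{\varepsilon}$ uniformly for $n\ll N$. Then for every $\varepsilon>0$, $$I_{f_1,f_2}(N,h)=\sum_{a}W(a)\,\mathcal{C}_{f_1,f_2}(a)+O_{\varepsilon}(N^{\varepsilon}h^3),$$ where the sum is over integers $a\in[-2h,2h]$.
   Context: For $r\ne0$, $\mathrm{sgn}(r)=|r|/r$, and $\mathrm{sgn}(0)=0$. The mixed symmetry integral is $$I_{f_1,f_2}(N,h)=\int_h^N\Big(\sum_{|n-x|\le h}f_1(n)\,\mathrm{sgn}(n-x)\Big)\Big(\sum_{|m-x|\le h}f_2(m)\,\mathrm{sgn}(m-x)\Big)\,dx.$$ For integers $a\in[-2h,2h]$, the mixed correlation is $\mathcal{C}_{f_1,f_2}(a)=\sum_{|a|<n\le N-|a|}f_1(n)f_2(n-a)$, and the weight is $W(a)=\max(2h-3|a|,\,|a|-2h)$; $W$ is supported in $[-2h,2h]$. *)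

From Stdlib Require Import Reals ZArith List.
From Coquelicot Require Import Coquelicot.
Open Scope R_scope.

Definition sgn (r : R) : R :=
  if Rlt_dec 0 r then 1 else if Rlt_dec r 0 then -1 else 0.

Definition sum_nat (M : nat) (F : nat -> R) : R :=
  fold_right Rplus 0 (map F (seq 0 M)).

Definition sum_Z (lo hi : Z) (F : Z -> R) : R :=
  fold_right Rplus 0
    (map (fun k => F (lo + Z.of_nat k)%Z) (seq 0 (Z.to_nat (hi - lo + 1)))).

(* \sum_{n in N, |n - x| <= h} f(n) sgn(n - x).  All such n satisfy
   n <= x + h < up (x + h), so the range 0 .. Z.to_nat (up (x+h)) suffices. *)
Definition window_sum (f : nat -> R) (x h : R) : R :=
  sum_nat (S (Z.to_nat (up (x + h))))
    (fun n => if Rle_dec (Rabs (INR n - x)) h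
              then f n * sgn (INR n - x) else 0).

Definition Isym (f1 f2 : nat -> R) (N : nat) (h : R) : R :=
  RInt (fun x => window_sum f1 x h * window_sum f2 x h) h (INR N).

Definition Corr (f1 f2 : nat -> R) (N : nat) (a : Z) : R :=
  sum_nat (S N)
    (fun n => if (Z.ltb (Z.abs a) (Z.of_nat n) && Z.leb (Z.of_nat n) (Z.of_nat N - Z.abs a))%bool
              then f1 n * f2 (Z.to_nat (Z.of_nat n - a)) else 0).

Definition Wt (h : R) (a : Z) : R :=
  Rmax (2 * h - 3 * Rabs (IZR a)) (Rabs (IZR a) - 2 * h).

Definition main_term (f1 f2 : nat -> R) (N : nat) (h : R) : R :=
  sum_Z (- Int_part (2 * h))%Z (Int_part (2 * h)) (fun a => Wt h a * Corr f1 f2 N a).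

(* f(n) <<_eps N^eps uniformly for n << N *)
Definition small_growth (f : nat -> R) : Prop :=
  forall eps C : R, 0 < eps -> 0 < C ->
    exists K : R, forall (N n : nat), (1 <= N)%nat -> INR n <= C * INR N ->
      Rabs (f n) <= K * Rpower (INR N) eps.

From Pilot Require Import Defs.
From Stdlib Require Import Reals ZArith List Lia Lra.
From Coquelicot Require Import Coquelicot.
(* Stdlib's Rfunctions also defines a [sum_nat]. *)
Import Defs.
Open Scope R_scope.

(* Expanding both window sums, I(N,h) = sum_{n,m} f1(n) f2(m) J(n,m), where J(n,m) is the
   integral over [h, N] of the product of the signed windows around n and m.  Each window is
   the indicator of [n-h, n) minus that of (n, n+h], so J is a signed sum of four lengths of
   interval intersections: it vanishes for |n - m| > 2h, and equals W(n - m) when the window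
   around n lies in [h, N].  Hence the inner sums over m coincide with those of the main term
   except for the O(h) values of n within about 2h of the ends of [0, N], and each inner sum
   is O(h^2 N^eps). *)

(** * Finite sums *)

Lemma fold_right_Rplus_init (l : list R) (c : R) :
  fold_right Rplus c l = fold_right Rplus 0 l + c.
Proof. induction l as [|x l IH]; simpl; [lra | rewrite IH; lra]. Qed.

Lemma sum_nat_O (F : nat -> R) : sum_nat 0 F = 0.
Proof. reflexivity. Qed.

Lemma sum_nat_S M (F : nat -> R) : sum_nat (S M) F = sum_nat M F + F M.
Proof.
  unfold sum_nat. rewrite seq_S, map_app, fold_right_app; simpl.
  rewrite fold_right_Rplus_init. lra.
Qed.

Lemma sum_nat_ext M (F G : nat -> R) :
  (forall i, (i < M)%nat -> F i = G i) -> sum_nat M F = sum_nat M G.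
Proof.
  induction M as [|M IH]; intros HFG; [reflexivity|].
  rewrite !sum_nat_S, IH, HFG; [reflexivity | lia | intros; apply HFG; lia].
Qed.

Lemma sum_nat_add M (F G : nat -> R) :
  sum_nat M (fun i => F i + G i) = sum_nat M F + sum_nat M G.
Proof. induction M as [|M IH]; [rewrite !sum_nat_O; lra | rewrite !sum_nat_S, IH; lra]. Qed.

Lemma sum_nat_sub M (F G : nat -> R) :
  sum_nat M (fun i => F i - G i) = sum_nat M F - sum_nat M G.
Proof. induction M as [|M IH]; [rewrite !sum_nat_O; lra | rewrite !sum_nat_S, IH; lra]. Qed.

Lemma sum_nat_scal M c (F : nat -> R) : sum_nat M (fun i => c * F i) = c * sum_nat M F.
Proof. induction M as [|M IH]; [rewrite !sum_nat_O; lra | rewrite !sum_nat_S, IH; lra]. Qed.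

Lemma sum_nat_mul M K (F G : nat -> R) :
  sum_nat M F * sum_nat K G = sum_nat M (fun i => sum_nat K (fun j => F i * G j)).
Proof.
  rewrite Rmult_comm, <- sum_nat_scal. apply sum_nat_ext. intros i _.
  rewrite Rmult_comm, <- sum_nat_scal. reflexivity.
Qed.

Lemma sum_nat_const M c : sum_nat M (fun _ => c) = INR M * c.
Proof. induction M as [|M IH]; [rewrite sum_nat_O; simpl; lra | rewrite sum_nat_S, IH, S_INR; lra]. Qed.

Lemma sum_nat_eq0 M (F : nat -> R) : (forall i, (i < M)%nat -> F i = 0) -> sum_nat M F = 0.
Proof.
  intros HF. rewrite (sum_nat_ext M F (fun _ => 0)) by exact HF.
  rewrite sum_nat_const. lra.
Qed.

Lemma sum_nat_split a b (F : nat -> R) :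
  sum_nat (a + b) F = sum_nat a F + sum_nat b (fun i => F (a + i)%nat).
Proof.
  induction b as [|b IH]; [rewrite Nat.add_0_r, sum_nat_O; lra|].
  rewrite Nat.add_succ_r, !sum_nat_S, IH. lra.
Qed.

Lemma sum_nat_rev M (F : nat -> R) : sum_nat M F = sum_nat M (fun i => F (M - 1 - i)%nat).
Proof.
  induction M as [|M IH]; [reflexivity|].
  rewrite sum_nat_S, IH. change (S M) with (1 + M)%nat.
  rewrite (sum_nat_split 1 M), Rplus_comm. f_equal.
  - unfold sum_nat; simpl. rewrite !Nat.sub_0_r. lra.
  - apply sum_nat_ext. intros. f_equal. lia.
Qed.

Lemma sum_nat_swap M K (G : nat -> nat -> R) :
  sum_nat M (fun i => sum_nat K (G i)) = sum_nat K (fun j => sum_nat M (fun i => G i j)).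
Proof.
  induction M as [|M IH].
  - symmetry. apply sum_nat_eq0. reflexivity.
  - rewrite sum_nat_S, IH, <- sum_nat_add.
    apply sum_nat_ext; intros. rewrite sum_nat_S. reflexivity.
Qed.

Lemma sum_nat_extend M L (F : nat -> R) : (M <= L)%nat ->
  (forall i, (M <= i < L)%nat -> F i = 0) -> sum_nat L F = sum_nat M F.
Proof.
  intros HML HF. replace L with (M + (L - M))%nat by lia.
  rewrite sum_nat_split, (sum_nat_eq0 (L - M)) by (intros; apply HF; lia). lra.
Qed.

Lemma sum_nat_window M s w (F : nat -> R) : (s + w <= M)%nat ->
  (forall i, (i < s \/ s + w <= i < M)%nat -> F i = 0) ->
  sum_nat M F = sum_nat w (fun i => F (s + i)%nat).
Proof.
  intros HM HF. replace M with (s + (w + (M - s - w)))%nat by lia.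
  rewrite !sum_nat_split, (sum_nat_eq0 s), (sum_nat_eq0 (M - s - w))
    by (intros; apply HF; lia).
  lra.
Qed.

Lemma Rabs_sum_nat_le M (F E : nat -> R) :
  (forall i, (i < M)%nat -> Rabs (F i) <= E i) -> Rabs (sum_nat M F) <= sum_nat M E.
Proof.
  induction M as [|M IH]; intros HFE; [rewrite !sum_nat_O, Rabs_R0; lra|].
  rewrite !sum_nat_S. eapply Rle_trans; [apply Rabs_triang|].
  apply Rplus_le_compat; [apply IH; intros; apply HFE; lia | apply HFE; lia].
Qed.

Lemma Rabs_sum_nat_le_const M (F : nat -> R) c :
  (forall i, (i < M)%nat -> Rabs (F i) <= c) -> Rabs (sum_nat M F) <= INR M * c.
Proof. intros HF. rewrite <- sum_nat_const. exact (Rabs_sum_nat_le M F _ HF). Qed.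

Lemma Rabs_sum_nat_supported_le M s w (F : nat -> R) c : 0 <= c ->
  (forall i, (i < M)%nat -> Rabs (F i) <= c) ->
  (forall i, (i < s \/ s + w <= i)%nat -> F i = 0) ->
  Rabs (sum_nat M F) <= INR w * c.
Proof.
  intros Hc HF Hsupp.
  enough (Rabs (sum_nat M F) <= INR (Nat.min M (s + w) - s) * c) as Hmin.
  { eapply Rle_trans; [exact Hmin|]. apply Rmult_le_compat_r; [lra|]. apply le_INR. lia. }
  induction M as [|M IH]; [rewrite sum_nat_O, Rabs_R0; simpl; lra|].
  rewrite sum_nat_S. eapply Rle_trans; [apply Rabs_triang|].
  assert (IH' : Rabs (sum_nat M F) <= INR (Nat.min M (s + w) - s) * c)
    by (apply IH; intros; apply HF; lia).
  destruct (Nat.lt_ge_cases M s) as [Hs|Hs];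
    [|destruct (Nat.lt_ge_cases M (s + w)) as [Hw|Hw]].
  - rewrite Hsupp, Rabs_R0 by lia.
    replace (Nat.min (S M) (s + w) - s)%nat with (Nat.min M (s + w) - s)%nat by lia. lra.
  - replace (Nat.min (S M) (s + w) - s)%nat with (S (Nat.min M (s + w) - s)) by lia.
    rewrite S_INR. specialize (HF M (Nat.lt_succ_diag_r M)). lra.
  - rewrite Hsupp, Rabs_R0 by lia.
    replace (Nat.min (S M) (s + w) - s)%nat with (Nat.min M (s + w) - s)%nat by lia. lra.
Qed.

Lemma Rabs_sum_nat_gap_le M s t (F : nat -> R) c : (s <= t <= M)%nat ->
  (forall i, (i < M)%nat -> Rabs (F i) <= c) -> (forall i, (s <= i < t)%nat -> F i = 0) ->
  Rabs (sum_nat M F) <= INR (s + (M - t)) * c.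
Proof.
  intros Hst HF Hgap. replace M with (s + ((t - s) + (M - t)))%nat at 1 by lia.
  rewrite !sum_nat_split, (sum_nat_eq0 (t - s)) by (intros; apply Hgap; lia).
  rewrite Rplus_0_l, plus_INR, Rmult_plus_distr_r.
  eapply Rle_trans; [apply Rabs_triang|].
  apply Rplus_le_compat; apply Rabs_sum_nat_le_const; intros; apply HF; lia.
Qed.

(** * Integrals of products of windows *)

(* The values at the endpoints c and d are left unconstrained. *)
Definition is_indicator (u : R -> R) (c d : R) : Prop :=
  forall x, (c < x < d -> u x = 1) /\ (x < c \/ d < x -> u x = 0).

Lemma is_indicator_mult u1 u2 c1 d1 c2 d2 :
  is_indicator u1 c1 d1 -> is_indicator u2 c2 d2 ->
  is_indicator (fun x => u1 x * u2 x) (Rmax c1 c2) (Rmin d1 d2).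
Proof.
  intros H1 H2 x.
  pose proof (Rmax_l c1 c2); pose proof (Rmax_r c1 c2).
  pose proof (Rmin_l d1 d2); pose proof (Rmin_r d1 d2).
  assert (Rmax c1 c2 = c1 \/ Rmax c1 c2 = c2) by (unfold Rmax; destruct Rle_dec; auto).
  assert (Rmin d1 d2 = d1 \/ Rmin d1 d2 = d2) by (unfold Rmin; destruct Rle_dec; auto).
  split; intros Hx.
  - rewrite (proj1 (H1 x)), (proj1 (H2 x)) by lra. lra.
  - destruct (Rlt_dec x c1); [rewrite (proj2 (H1 x)) by lra; lra|].
    destruct (Rlt_dec d1 x); [rewrite (proj2 (H1 x)) by lra; lra|].
    rewrite (proj2 (H2 x)) by lra. lra.
Qed.

Lemma is_RInt_const_on (u : R -> R) a b v : a <= b ->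
  (forall x, a < x < b -> u x = v) -> is_RInt u a b ((b - a) * v).
Proof.
  intros Hab Hu. apply (is_RInt_ext (fun _ => v)); [|exact (is_RInt_const a b v)].
  rewrite Rmin_left, Rmax_right by lra. intros x Hx. symmetry. exact (Hu x Hx).
Qed.

Lemma is_RInt_indicator u c d A B : A <= B -> is_indicator u c d ->
  is_RInt u A B (Rmax 0 (Rmin d B - Rmax c A)).
Proof.
  intros HAB Hu.
  pose proof (Rmax_l c A); pose proof (Rmax_r c A).
  pose proof (Rmin_l d B); pose proof (Rmin_r d B).
  assert (Rmax c A = c \/ Rmax c A = A) by (unfold Rmax; destruct Rle_dec; auto).
  assert (Rmin d B = d \/ Rmin d B = B) by (unfold Rmin; destruct Rle_dec; auto).
  set (lo := Rmax c A) in *; set (hi := Rmin d B) in *.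
  destruct (Rle_lt_dec lo hi) as [Hlh|Hlh].
  - rewrite Rmax_right by lra.
    replace (hi - lo) with ((lo - A) * 0 + (hi - lo) * 1 + (B - hi) * 0) by ring.
    apply (is_RInt_Chasles u A hi B ((lo - A) * 0 + (hi - lo) * 1) ((B - hi) * 0));
      [apply (is_RInt_Chasles u A lo hi ((lo - A) * 0) ((hi - lo) * 1))|];
      apply is_RInt_const_on; try lra; intros x Hx; apply Hu; lra.
  - rewrite Rmax_left by lra. replace 0 with ((B - A) * 0) by ring.
    apply is_RInt_const_on; [lra|]. intros x Hx. apply Hu. lra.
Qed.

Definition sgn_window (H : R) (n : nat) (x : R) : R :=
  if Rle_dec (Rabs (INR n - x)) H then sgn (INR n - x) else 0.

Definition window_left (H : R) (n : nat) (x : R) : R :=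
  if Rle_dec (Rabs (INR n - x)) H then (if Rlt_dec 0 (INR n - x) then 1 else 0) else 0.

Definition window_right (H : R) (n : nat) (x : R) : R :=
  if Rle_dec (Rabs (INR n - x)) H then (if Rlt_dec (INR n - x) 0 then 1 else 0) else 0.

Lemma sgn_window_split H n x : sgn_window H n x = window_left H n x - window_right H n x.
Proof.
  unfold sgn_window, window_left, window_right, sgn.
  destruct Rle_dec; [|lra]. destruct (Rlt_dec 0 _), (Rlt_dec _ 0); lra.
Qed.

Lemma is_indicator_window_left H n : is_indicator (window_left H n) (INR n - H) (INR n).
Proof.
  intros x; unfold window_left; split; intros Hx.
  - rewrite Rabs_right by lra. destruct Rle_dec; [|lra]. destruct Rlt_dec; lra.
  - destruct Rle_dec as [Hle|]; [|lra]. destruct Rlt_dec; [|lra].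
    rewrite Rabs_right in Hle by lra. lra.
Qed.

Lemma is_indicator_window_right H n : is_indicator (window_right H n) (INR n) (INR n + H).
Proof.
  intros x; unfold window_right; split; intros Hx.
  - rewrite Rabs_left by lra. destruct Rle_dec; [|lra]. destruct Rlt_dec; lra.
  - destruct Rle_dec as [Hle|]; [|lra]. destruct Rlt_dec; [|lra].
    rewrite Rabs_left in Hle by lra. lra.
Qed.

Definition overlap (A B c1 d1 c2 d2 : R) : R :=
  Rmax 0 (Rmin (Rmin d1 d2) B - Rmax (Rmax c1 c2) A).

Definition window_pair_integral (A B H p q : R) : R :=
  overlap A B (p - H) p (q - H) q - overlap A B (p - H) p q (q + H)
  - overlap A B p (p + H) (q - H) q + overlap A B p (p + H) q (q + H).

Lemma is_RInt_overlap u1 u2 c1 d1 c2 d2 A B : A <= B ->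
  is_indicator u1 c1 d1 -> is_indicator u2 c2 d2 ->
  is_RInt (fun x => u1 x * u2 x) A B (overlap A B c1 d1 c2 d2).
Proof.
  intros HAB H1 H2. apply is_RInt_indicator; [exact HAB|].
  exact (is_indicator_mult _ _ _ _ _ _ H1 H2).
Qed.

Lemma is_RInt_sgn_window_mult A B H n m : A <= B ->
  is_RInt (fun x => sgn_window H n x * sgn_window H m x) A B
    (window_pair_integral A B H (INR n) (INR m)).
Proof.
  intros HAB.
  pose proof (is_indicator_window_left H n) as Ln.
  pose proof (is_indicator_window_right H n) as Rn.
  pose proof (is_indicator_window_left H m) as Lm.
  pose proof (is_indicator_window_right H m) as Rm.
  pose proof (is_RInt_plus _ _ A B _ _
    (is_RInt_minus _ _ A B _ _
      (is_RInt_minus _ _ A B _ _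
        (is_RInt_overlap _ _ _ _ _ _ A B HAB Ln Lm) (is_RInt_overlap _ _ _ _ _ _ A B HAB Ln Rm))
      (is_RInt_overlap _ _ _ _ _ _ A B HAB Rn Lm))
    (is_RInt_overlap _ _ _ _ _ _ A B HAB Rn Rm)) as Hsum.
  refine (is_RInt_ext _ _ A B _ _ Hsum).
  intros x _. rewrite !sgn_window_split. cbn. ring.
Qed.

Ltac no_minmax t :=
  lazymatch t with context [Rmax _ _] => fail | context [Rmin _ _] => fail | _ => idtac end.

Ltac split_innermost_minmax :=
  match goal with
  | |- context [Rmax ?a ?b] => no_minmax a; no_minmax b; destruct (Rle_dec a b);
      [rewrite (Rmax_right a b) by lra | rewrite (Rmax_left a b) by lra]
  | |- context [Rmin ?a ?b] => no_minmax a; no_minmax b; destruct (Rle_dec a b);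
      [rewrite (Rmin_left a b) by lra | rewrite (Rmin_right a b) by lra]
  end.

Ltac solve_overlap := unfold overlap; repeat (split_innermost_minmax; try lra); try lra.

Lemma window_pair_integral_interior A B H p q : 0 <= H ->
  A <= p - H -> p + H <= B -> Rabs (p - q) <= 2 * H ->
  window_pair_integral A B H p q = Rmax (2 * H - 3 * Rabs (p - q)) (Rabs (p - q) - 2 * H).
Proof.
  intros H0 HA HB Hd. unfold window_pair_integral.
  destruct (Rle_dec q p).
  - rewrite Rabs_right in Hd |- * by lra.
    destruct (Rle_dec (p - q) H).
    + replace (overlap A B (p - H) p (q - H) q) with (H - (p - q)) by solve_overlap.
      replace (overlap A B (p - H) p q (q + H)) with (p - q) by solve_overlap.
      replace (overlap A B p (p + H) (q - H) q) with 0 by solve_overlap.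
      replace (overlap A B p (p + H) q (q + H)) with (H - (p - q)) by solve_overlap.
      rewrite Rmax_left; lra.
    + replace (overlap A B (p - H) p (q - H) q) with 0 by solve_overlap.
      replace (overlap A B (p - H) p q (q + H)) with (2 * H - (p - q)) by solve_overlap.
      replace (overlap A B p (p + H) (q - H) q) with 0 by solve_overlap.
      replace (overlap A B p (p + H) q (q + H)) with 0 by solve_overlap.
      rewrite Rmax_right; lra.
  - rewrite Rabs_left in Hd |- * by lra.
    destruct (Rle_dec (q - p) H).
    + replace (overlap A B (p - H) p (q - H) q) with (H - (q - p)) by solve_overlap.
      replace (overlap A B (p - H) p q (q + H)) with 0 by solve_overlap.
      replace (overlap A B p (p + H) (q - H) q) with (q - p) by solve_overlap.
      replace (overlap A B p (p + H) q (q + H)) with (H - (q - p)) by solve_overlap.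
      rewrite Rmax_left; lra.
    + replace (overlap A B (p - H) p (q - H) q) with 0 by solve_overlap.
      replace (overlap A B (p - H) p q (q + H)) with 0 by solve_overlap.
      replace (overlap A B p (p + H) (q - H) q) with (2 * H - (q - p)) by solve_overlap.
      replace (overlap A B p (p + H) q (q + H)) with 0 by solve_overlap.
      rewrite Rmax_right; lra.
Qed.

Lemma overlap_eq0 A B c1 d1 c2 d2 :
  Rmin (Rmin d1 d2) B <= Rmax (Rmax c1 c2) A -> overlap A B c1 d1 c2 d2 = 0.
Proof. intros Hle. unfold overlap. apply Rmax_left. lra. Qed.

Lemma window_pair_integral_far A B H p q : 0 <= H -> 2 * H < Rabs (p - q) ->
  window_pair_integral A B H p q = 0.
Proof.
  intros H0 Hd. unfold window_pair_integral.
  destruct (Rle_dec q p); [rewrite Rabs_right in Hd by lra | rewrite Rabs_left in Hd by lra];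
    rewrite !overlap_eq0 by solve_overlap; lra.
Qed.

Lemma overlap_bounds A B c1 d1 c2 d2 : c1 <= d1 -> 0 <= overlap A B c1 d1 c2 d2 <= d1 - c1.
Proof.
  intros Hcd. unfold overlap. split; [apply Rmax_l|].
  pose proof (Rmin_l (Rmin d1 d2) B); pose proof (Rmin_l d1 d2).
  pose proof (Rmax_l (Rmax c1 c2) A); pose proof (Rmax_l c1 c2).
  apply Rmax_lub; lra.
Qed.

Lemma Rabs_window_pair_integral_le A B H p q : 0 <= H ->
  Rabs (window_pair_integral A B H p q) <= 4 * H.
Proof.
  intros H0. unfold window_pair_integral.
  pose proof (overlap_bounds A B (p - H) p (q - H) q).
  pose proof (overlap_bounds A B (p - H) p q (q + H)).
  pose proof (overlap_bounds A B p (p + H) (q - H) q).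
  pose proof (overlap_bounds A B p (p + H) q (q + H)).
  apply Rabs_le. lra.
Qed.

(** * Both sides as double sums *)

Lemma IZR_le_INR_Z_to_nat z : IZR z <= INR (Z.to_nat z).
Proof.
  destruct (Z_le_dec 0 z) as [Hz|Hz].
  - rewrite INR_IZR_INZ, Z2Nat.id by exact Hz. lra.
  - replace (Z.to_nat z) with O by lia. apply IZR_le. lia.
Qed.

Lemma window_sum_eq f x H L : (S (Z.to_nat (up (x + H))) <= L)%nat ->
  window_sum f x H = sum_nat L (fun n => f n * sgn_window H n x).
Proof.
  intros HL. unfold window_sum. rewrite (sum_nat_extend _ L _ HL).
  - apply sum_nat_ext. intros n _. unfold sgn_window. destruct Rle_dec; ring.
  - intros n [Hn _]. unfold sgn_window. destruct Rle_dec as [Hle|]; [|ring]. exfalso.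
    apply le_INR in Hn. rewrite S_INR in Hn.
    pose proof (IZR_le_INR_Z_to_nat (up (x + H))). destruct (archimed (x + H)).
    apply Rabs_le_between in Hle. lra.
Qed.

Lemma is_RInt_sum_nat M (F : nat -> R -> R) (v : nat -> R) a b :
  (forall i, (i < M)%nat -> is_RInt (F i) a b (v i)) ->
  is_RInt (fun x => sum_nat M (fun i => F i x)) a b (sum_nat M v).
Proof.
  induction M as [|M IH]; intros HF.
  - replace (sum_nat 0 v) with (scal (b - a) 0)
      by (rewrite sum_nat_O; cbn; unfold mult; cbn; ring).
    apply (is_RInt_ext (fun _ => 0)); [reflexivity | exact (is_RInt_const a b 0)].
  - rewrite sum_nat_S.
    apply (is_RInt_ext (fun x => sum_nat M (fun i => F i x) + F M x)).
    { intros; rewrite sum_nat_S; reflexivity. }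
    apply (is_RInt_plus _ _ a b (sum_nat M v) (v M));
      [apply IH; intros; apply HF; lia | apply HF; lia].
Qed.

Lemma is_RInt_mult_l (f : R -> R) a b k l :
  is_RInt f a b l -> is_RInt (fun x => k * f x) a b (k * l).
Proof. exact (is_RInt_scal f a b k l). Qed.

Definition pair_inner (f2 : nat -> R) (N : nat) (H : R) (L n : nat) : R :=
  sum_nat L (fun m => f2 m * window_pair_integral H (INR N) H (INR n) (INR m)).

Lemma Isym_double_sum f1 f2 N H L : H <= INR N ->
  (forall x, H < x < INR N -> (S (Z.to_nat (up (x + H))) <= L)%nat) ->
  Isym f1 f2 N H = sum_nat L (fun n => f1 n * pair_inner f2 N H L n).
Proof.
  intros HN HL. unfold Isym. apply is_RInt_unique.
  apply (is_RInt_ext (fun x =>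
    sum_nat L (fun n => f1 n * sum_nat L (fun m => f2 m * (sgn_window H n x * sgn_window H m x))))).
  - rewrite Rmin_left, Rmax_right by lra. intros x Hx. symmetry.
    rewrite (window_sum_eq f1 x H L), (window_sum_eq f2 x H L) by (apply HL; lra).
    rewrite sum_nat_mul. apply sum_nat_ext. intros n _.
    rewrite <- sum_nat_scal. apply sum_nat_ext. intros. ring.
  - apply is_RInt_sum_nat. intros n _. apply is_RInt_mult_l.
    apply is_RInt_sum_nat. intros m _. apply is_RInt_mult_l.
    apply is_RInt_sgn_window_mult. exact HN.
Qed.

Definition corr_range (N n : nat) (a : Z) : bool :=
  (Z.ltb (Z.abs a) (Z.of_nat n) && Z.leb (Z.of_nat n) (Z.of_nat N - Z.abs a))%bool.

Definition corr_term (f2 : nat -> R) (N : nat) (H : R) (n : nat) (a : Z) : R :=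
  if corr_range N n a then Wt H a * f2 (Z.to_nat (Z.of_nat n - a)) else 0.

Definition corr_inner (f2 : nat -> R) (N : nat) (H : R) (Fn n : nat) : R :=
  sum_Z (- Z.of_nat Fn) (Z.of_nat Fn) (corr_term f2 N H n).

Lemma sum_Z_sym k (G : Z -> R) :
  sum_Z (- Z.of_nat k) (Z.of_nat k) G =
  sum_nat (2 * k + 1) (fun i => G (Z.of_nat i - Z.of_nat k)%Z).
Proof.
  unfold sum_Z. replace (Z.to_nat (Z.of_nat k - - Z.of_nat k + 1)) with (2 * k + 1)%nat by lia.
  apply sum_nat_ext. intros. f_equal. lia.
Qed.

Lemma main_term_double_sum f1 f2 N H Fn L :
  Int_part (2 * H) = Z.of_nat Fn -> (S N <= L)%nat ->
  main_term f1 f2 N H = sum_nat L (fun n => f1 n * corr_inner f2 N H Fn n).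
Proof.
  intros HF HL. unfold main_term. rewrite HF, sum_Z_sym.
  transitivity (sum_nat (2 * Fn + 1) (fun k => sum_nat (S N) (fun n =>
    f1 n * corr_term f2 N H n (Z.of_nat k - Z.of_nat Fn)))).
  { apply sum_nat_ext. intros k _. unfold Corr. rewrite <- sum_nat_scal.
    apply sum_nat_ext. intros n _. unfold corr_term, corr_range.
    destruct (_ && _)%bool; ring. }
  rewrite sum_nat_swap, (sum_nat_extend (S N) L _ HL).
  - apply sum_nat_ext. intros n _. unfold corr_inner.
    rewrite sum_Z_sym, sum_nat_scal. reflexivity.
  - intros n Hn. unfold corr_inner. rewrite sum_Z_sym, sum_nat_eq0; [ring|].
    intros k _. unfold corr_term, corr_range.
    replace (Z.of_nat n <=? _)%Z with false by (symmetry; apply Z.leb_gt; lia).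
    rewrite Bool.andb_false_r. reflexivity.
Qed.

Lemma Rabs_Wt_le H a : Rabs (IZR a) <= 2 * H -> Rabs (Wt H a) <= 4 * H.
Proof.
  intros Ha. unfold Wt. pose proof (Rabs_pos (IZR a)).
  apply Rabs_le. split; [eapply Rle_trans; [|apply Rmax_r]; lra | apply Rmax_lub; lra].
Qed.

(** * The error estimate *)

Lemma Int_part_nat x : 0 <= x ->
  exists k : nat, Int_part x = Z.of_nat k /\ INR k <= x < INR k + 1.
Proof.
  intros Hx. destruct (base_Int_part x) as [Hle Hgt].
  assert (Hpos : (0 <= Int_part x)%Z) by (apply Z.lt_pred_le, lt_IZR; simpl; lra).
  exists (Z.to_nat (Int_part x)). rewrite INR_IZR_INZ, Z2Nat.id by exact Hpos.
  split; [reflexivity | lra].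
Qed.

Lemma nat_above x : 0 <= x -> exists k : nat, x < INR k <= x + 1.
Proof.
  intros Hx. destruct (archimed x) as [Hgt Hle].
  assert (Hpos : (0 <= up x)%Z) by (apply le_IZR; lra).
  exists (Z.to_nat (up x)). rewrite INR_IZR_INZ, Z2Nat.id by exact Hpos. lra.
Qed.

Section InnerSums.

Variables (f2 : nat -> R) (N : nat) (H : R) (Fn : nat).
Hypothesis H_ge1 : 1 <= H.
Hypothesis Fn_floor : INR Fn <= 2 * H < INR Fn + 1.

Lemma far_apart n m : (m + Fn + 1 <= n \/ n + Fn + 1 <= m)%nat ->
  2 * H < Rabs (INR n - INR m).
Proof.
  intros [Hnm|Hnm]; apply le_INR in Hnm; rewrite !plus_INR in Hnm; simpl in Hnm.
  - rewrite Rabs_right by lra. lra.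
  - rewrite Rabs_left by lra. lra.
Qed.

Lemma pair_inner_eq_corr_inner L n : (Fn + 1 <= n)%nat -> (n + Fn <= N)%nat -> (N < L)%nat ->
  pair_inner f2 N H L n = corr_inner f2 N H Fn n.
Proof.
  intros Hn1 Hn2 HL. unfold pair_inner, corr_inner.
  rewrite sum_Z_sym, (sum_nat_rev (2 * Fn + 1)).
  rewrite (sum_nat_window L (n - Fn) (2 * Fn + 1)) by (try lia; intros m Hm;
    rewrite window_pair_integral_far by (try lra; apply far_apart; lia); ring).
  apply sum_nat_ext. intros i Hi.
  (* The i-th term on the right has a = Fn - i, i.e. m = n - a = n - Fn + i. *)
  set (a := (Z.of_nat (2 * Fn + 1 - 1 - i) - Z.of_nat Fn)%Z). unfold corr_term.
  replace (corr_range N n a) with true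
    by (symmetry; apply andb_true_intro; split; [apply Z.ltb_lt | apply Z.leb_le]; lia).
  replace (Z.to_nat (Z.of_nat n - a)) with (n - Fn + i)%nat by lia.
  assert (Hdiff : INR n - INR (n - Fn + i) = IZR a).
  { rewrite !INR_IZR_INZ, <- minus_IZR. f_equal. lia. }
  apply le_INR in Hn1, Hn2. rewrite !plus_INR in Hn1, Hn2. simpl in Hn1.
  rewrite window_pair_integral_interior, Hdiff; try lra.
  - unfold Wt. ring.
  - rewrite Hdiff, <- abs_IZR. apply Rle_trans with (INR Fn); [|lra].
    rewrite INR_IZR_INZ. apply IZR_le. lia.
Qed.

Lemma Rabs_pair_inner_le L n B2 : 0 <= B2 ->
  (forall m, (m < L)%nat -> Rabs (f2 m) <= B2) ->
  Rabs (pair_inner f2 N H L n) <= INR (2 * Fn + 1) * (4 * H * B2).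
Proof.
  intros HB Hf. apply (Rabs_sum_nat_supported_le L (n - Fn)); [nra| |].
  - intros m Hm. rewrite Rabs_mult, Rmult_comm.
    apply Rmult_le_compat; try apply Rabs_pos; [apply Rabs_window_pair_integral_le; lra | auto].
  - intros m Hm. rewrite window_pair_integral_far by (try lra; apply far_apart; lia). ring.
Qed.

Lemma Rabs_corr_inner_le n B2 : 0 <= B2 ->
  (forall m, (m <= N)%nat -> Rabs (f2 m) <= B2) ->
  Rabs (corr_inner f2 N H Fn n) <= INR (2 * Fn + 1) * (4 * H * B2).
Proof.
  intros HB Hf. unfold corr_inner. rewrite sum_Z_sym.
  apply Rabs_sum_nat_le_const. intros k Hk. unfold corr_term.
  destruct (corr_range N n _) eqn:Hrange; [|rewrite Rabs_R0; nra].
  apply andb_prop in Hrange as [_ Hrange]. apply Z.leb_le in Hrange.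
  rewrite Rabs_mult. apply Rmult_le_compat; try apply Rabs_pos.
  - apply Rabs_Wt_le. rewrite <- abs_IZR. apply Rle_trans with (INR Fn); [|lra].
    rewrite INR_IZR_INZ. apply IZR_le. lia.
  - apply Hf. lia.
Qed.

Lemma Rabs_inner_diff_le L n B2 : 0 <= B2 -> (N < L)%nat ->
  (forall m, (m < L)%nat -> Rabs (f2 m) <= B2) ->
  Rabs (pair_inner f2 N H L n - corr_inner f2 N H Fn n) <= 2 * (INR (2 * Fn + 1) * (4 * H * B2)).
Proof.
  intros HB HL Hf. unfold Rminus. eapply Rle_trans; [apply Rabs_triang|].
  rewrite Rabs_Ropp, <- Rplus_diag. apply Rplus_le_compat.
  - exact (Rabs_pair_inner_le L n B2 HB Hf).
  - apply (Rabs_corr_inner_le n B2 HB). intros m Hm. apply Hf. lia.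
Qed.

End InnerSums.

Lemma Isym_main_term_error f1 f2 N H B1 B2 : 1 <= H -> 8 * H <= INR N ->
  (forall n, INR n <= 2 * INR N -> Rabs (f1 n) <= B1) ->
  (forall n, INR n <= 2 * INR N -> Rabs (f2 n) <= B2) ->
  Rabs (Isym f1 f2 N H - main_term f1 f2 N H) <= 280 * B1 * B2 * H ^ 3.
Proof.
  intros H1 HN Hf1 Hf2.
  assert (HB1 : 0 <= B1) by (eapply Rle_trans; [apply Rabs_pos | apply (Hf1 O); simpl; lra]).
  assert (HB2 : 0 <= B2) by (eapply Rle_trans; [apply Rabs_pos | apply (Hf2 O); simpl; lra]).
  destruct (Int_part_nat (2 * H)) as [Fn [HF HFn]]; [lra|].
  destruct (nat_above H) as [U HU]; [lra|].
  assert (HFnN : (2 * Fn <= N)%nat) by (apply INR_le; rewrite mult_INR; simpl; lra).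
  set (L := (N + U + 1)%nat).
  assert (HL : forall m, (m < L)%nat -> INR m <= 2 * INR N).
  { intros m Hm. apply le_INR in Hm. unfold L in Hm.
    rewrite S_INR, !plus_INR in Hm. simpl in Hm. lra. }
  assert (Hwin : forall x, H < x < INR N -> (S (Z.to_nat (up (x + H))) <= L)%nat).
  { intros x Hx. destruct (archimed (x + H)).
    assert (up (x + H) < Z.of_nat (N + U) + 1)%Z
      by (apply lt_IZR; rewrite plus_IZR, <- INR_IZR_INZ, plus_INR; simpl; lra).
    unfold L. lia. }
  rewrite (Isym_double_sum f1 f2 N H L), (main_term_double_sum f1 f2 N H Fn L), <- sum_nat_sub
    by (exact HF || lra || exact Hwin || (unfold L; lia)).
  set (c := INR (2 * Fn + 1) * (4 * H * B2)).
  apply Rle_trans with (INR (Fn + 1 + (L - (N - Fn + 1))) * (B1 * (2 * c))).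
  - apply Rabs_sum_nat_gap_le; [unfold L; lia | |].
    + intros n Hn. rewrite <- Rmult_minus_distr_l, Rabs_mult.
      apply Rmult_le_compat; try apply Rabs_pos; [apply Hf1, HL, Hn|].
      apply (Rabs_inner_diff_le f2 N H Fn H1 HFn); [exact HB2 | unfold L; lia | ].
      intros m Hm. apply Hf2, HL, Hm.
    + intros n Hn. rewrite (pair_inner_eq_corr_inner f2 N H Fn H1 HFn) by (unfold L; lia). ring.
  - replace (Fn + 1 + (L - (N - Fn + 1)))%nat with (2 * Fn + U + 1)%nat by (unfold L; lia).
    assert (Hc : c <= 20 * H ^ 2 * B2).
    { unfold c. apply Rle_trans with (5 * H * (4 * H * B2)); [|right; ring].
      apply Rmult_le_compat_r; [nra|]. rewrite plus_INR, mult_INR. simpl. lra. }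
    assert (Hcount : INR (2 * Fn + U + 1) <= 7 * H).
    { rewrite !plus_INR, mult_INR. simpl. lra. }
    assert (0 <= c) by (unfold c; apply Rmult_le_pos; [apply pos_INR | nra]).
    apply Rle_trans with (7 * H * (B1 * (2 * (20 * H ^ 2 * B2)))); [|nra].
    apply Rmult_le_compat; [apply pos_INR | nra | exact Hcount | nra].
Qed.

Theorem lemma1 (h : nat -> R) (f1 f2 : nat -> R)
  (h_infty : forall M : R, exists N0 : nat, forall N : nat, (N0 <= N)%nat -> M <= h N)
  (h_small : forall c : R, 0 < c -> exists N0 : nat, forall N : nat, (N0 <= N)%nat ->
               Rabs (h N) <= c * INR N)
  (Hf1 : small_growth f1) (Hf2 : small_growth f2) :
  forall eps : R, 0 < eps ->
    exists K : R, exists N0 : nat, forall N : nat, (1 <= N)%nat -> (N0 <= N)%nat ->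
      Rabs (Isym f1 f2 N (h N) - main_term f1 f2 N (h N))
        <= K * Rpower (INR N) eps * (h N) ^ 3.
Proof.
  intros eps Heps.
  destruct (Hf1 (eps / 2) 2) as [K1 HK1]; [lra | lra |].
  destruct (Hf2 (eps / 2) 2) as [K2 HK2]; [lra | lra |].
  destruct (h_infty 1) as [N1 HN1].
  destruct (h_small (1 / 8)) as [N2 HN2]; [lra|].
  exists (280 * K1 * K2), (Nat.max N1 N2).
  intros N HN HN0.
  replace (Rpower (INR N) eps) with (Rpower (INR N) (eps / 2) * Rpower (INR N) (eps / 2))
    by (rewrite <- Rpower_plus; f_equal; lra).
  replace (280 * K1 * K2 * (Rpower (INR N) (eps / 2) * Rpower (INR N) (eps / 2)) * h N ^ 3)
    with (280 * (K1 * Rpower (INR N) (eps / 2)) * (K2 * Rpower (INR N) (eps / 2)) * h N ^ 3)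
    by ring.
  apply Isym_main_term_error.
  - apply HN1. lia.
  - pose proof (HN2 N ltac:(lia)). pose proof (Rle_abs (h N)). lra.
  - intros n Hn. exact (HK1 N n HN Hn).
  - intros n Hn. exact (HK2 N n HN Hn).
Qed.
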